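(* Let $n,k,d$ be positive integers with $k\le d<n$, let $\alpha>0$, and for each integer $M\ge 0$ set $n_M=n+M$, $k_M=k+M$, $d_M=d+M$, $\gamma_{MSR}=\frac{d_M\alpha}{d_M-k_M+1}$ and $\gamma_{MBR}=\alpha$. Let $s\in[0,1]$ be fixed. Then $$ \lim_{M\to\infty}\frac{C^{\text{exact}}_{n_M,k_M,d_M}\big(\alpha,\,s\gamma_{MSR}+(1-s)\gamma_{MBR}\big)}{C_{k_M,d_M}\big(\alpha,\,s\gamma_{MSR}+(1-s)\gamma_{MBR}\big)}=1. $$
   Context: A distributed storage system (regenerating code) with parameters $(n,k,d)$, node size $\alpha$ and total repair bandwidth $\gamma$ stores a file on $n$ nodes, each node storing an amount $\alpha$ of information, such that the file can be reconstructed from the contents of any $k$ nodes, and any lost node can be repaired by contacting any $d$ of the remaining nodes, each of which transmits an amount $\beta=\gamma/d$ to the new node. The code has exact repair if the repaired node stores exactly the same content as the lost node, and functional repair if the repaired node need only preserve the reconstruction and repair properties. $C^{\text{exact}}_{n,k,d}(\alpha,\gamma)$ denotes the capacity (maximum storable file size) of exact-repair codes with these parameters. Amounts of information are treated as arbitrarily divisible, so capacities are positively homogeneous. $C_{k,d}(\alpha,\gamma)$ denotes the capacity of functional-repair codes, which equals $\sum_{j=0}^{k-1}\min\{\alpha,\frac{d-j}{d}\gamma\}$. *)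

From Stdlib Require Import Reals List Arith.
From Coquelicot Require Import Coquelicot.
Import ListNotations.
Open Scope R_scope.

Definition node_set (n : nat) (H : list nat) : Prop :=
  NoDup H /\ (forall j, In j H -> (j < n)%nat).

(* Exact-repair regenerating code with parameters (n,k,d), block length l,
   storing a file taking B values (files are 0..B-1), each node storing at
   most 2^(l*alpha) symbols' worth (i.e. its content lies in a set of size
   A <= 2^(l alpha)), each helper transmitting a message from a set of size
   Bt <= 2^(l beta), beta = gamma/d.  Amounts are per unit of block length,
   measured in bits. *)
Definition exact_repair_code (n k d : nat) (alpha gamma : R) (l B : nat) : Prop :=
  exists (A Bt : nat) (f : nat -> nat -> nat),
    INR A <= Rpower 2 (INR l * alpha) /\
    INR Bt <= Rpower 2 (INR l * (gamma / INR d)) /\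
    (forall i m, (i < n)%nat -> (m < B)%nat -> (f i m < A)%nat) /\
    (forall K, node_set n K -> length K = k ->
       exists D : list nat -> nat,
         forall m, (m < B)%nat -> D (map (fun j => f j m) K) = m) /\
    (forall i H, (i < n)%nat -> node_set n H -> length H = d -> ~ In i H ->
       exists (g : nat -> nat -> nat) (r : list nat -> nat),
         (forall j x, (g j x < Bt)%nat) /\
         forall m, (m < B)%nat ->
           r (map (fun j => g j (f j m)) H) = f i m).

Definition achievable_rate (n k d : nat) (alpha gamma : R) (x : R) : Prop :=
  exists l B, (0 < l)%nat /\ (0 < B)%nat /\
    exact_repair_code n k d alpha gamma l B /\
    x = ln (INR B) / ln 2 / INR l.

Definition C_exact (n k d : nat) (alpha gamma : R) : R :=
  real (Lub_Rbar (achievable_rate n k d alpha gamma)).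

Definition C_func (k d : nat) (alpha gamma : R) : R :=
  fold_right Rplus 0
    (map (fun j => Rmin alpha ((INR d - INR j) / INR d * gamma)) (seq 0 k)).

From Stdlib Require Import Reals List Arith Lia Lra.
From Coquelicot Require Import Coquelicot.
From mathcomp Require all_boot all_algebra zify.
Open Scope R_scope.

(* The ratio is at most 1 by the cut-set bound.  In a code storing B files, the contents of
   node j take at most min(A, Bt^(d-j)) values once nodes 0, ..., j-1 are known, since node j
   can be repaired from them and d - j further helpers; hence B <= prod_(j<k) min(A, Bt^(d-j)),
   and taking logarithms, C_exact <= C_func.

   For the lower bound it suffices to have linear codes over F_p, for arbitrarily large
   primes p, with B = p^Z, A = p^X, Bt = p^Y and Y alpha <= X gamma/d: the block length
   l ~ X ln p / (alpha ln 2) then gives C_exact >= Z alpha / X.  At s = 0, i.e. gamma = alpha,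
   the product-matrix MBR code attains C_func.  For s > 0 fix q with d - k + 1 <= q s, so
   that alpha <= q gamma/d for every M.  Index codes by colourings h of the n nodes with q
   colours and store, for every colour c, a Reed-Solomon block of length |h^-1 c| - (n - k)
   on the nodes coloured c.  Then X = q^n, Y = q^(n-1) and Z >= q^n (k - (q-1)(n-k)),
   while C_func <= k alpha; since (q-1)(n-k) does not depend on M, the ratio tends to 1. *)

Definition repair_scheme (n k d B A Bt : nat) : Prop :=
  exists f : nat -> nat -> nat,
    (forall i m, (i < n)%nat -> (m < B)%nat -> (f i m < A)%nat) /\
    (forall K, node_set n K -> length K = k ->
       exists D : list nat -> nat,
         forall m, (m < B)%nat -> D (map (fun j => f j m) K) = m) /\
    (forall i H, (i < n)%nat -> node_set n H -> length H = d -> ~ In i H ->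
       exists (g : nat -> nat -> nat) (r : list nat -> nat),
         (forall j x, (g j x < Bt)%nat) /\
         forall m, (m < B)%nat ->
           r (map (fun j => g j (f j m)) H) = f i m).

Fixpoint mbr_file_size (d k : nat) : nat :=
  match k with 0 => 0%nat | S k' => (mbr_file_size d k' + (d - k'))%nat end.

Fixpoint prodn (c : nat -> nat) (k : nat) : nat :=
  match k with 0 => 1%nat | S k' => (prodn c k' * c k')%nat end.

Module SchemeBasics.
Import all_boot all_algebra zify.
Import GRing.Theory.
Local Close Scope R_scope.
Local Open Scope nat_scope.

Lemma In_mem (x : nat) (l : list nat) : List.In x l <-> x \in l.
Proof.
elim: l => [|y l IH] //=; rewrite inE; split.
- by case=> [->|/IH ->]; rewrite ?eqxx ?orbT.
- by case/orP=> [/eqP->|/IH]; [left|right].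
Qed.

Lemma List_mapE (A B : Type) (f : A -> B) l : List.map f l = map f l.
Proof. by elim: l => //= x l ->. Qed.

Lemma List_lengthE (A : Type) (l : list A) : length l = size l.
Proof. by elim: l => //= x l ->. Qed.

Lemma List_seqE a b : List.seq a b = iota a b.
Proof. by elim: b a => //= b IH a; rewrite IH. Qed.

Lemma Nat_powE a b : Nat.pow a b = a ^ b.
Proof. by elim: b => //= b IH; rewrite expnS IH mulnE. Qed.

Lemma NoDup_uniq (l : list nat) : NoDup l <-> uniq l.
Proof.
elim: l => [|x l IH] /=; first by split=> // _; constructor.
rewrite NoDup_cons_iff IH; split=> [[nx ->]|/andP [nx u]]; last first.
  by split=> //; move/In_mem; apply/negP.
by rewrite andbT; apply/negP => /In_mem.
Qed.

Lemma node_setP n (L : seq nat) :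
  node_set n L <-> uniq L /\ all (fun j => j < n) L.
Proof.
rewrite /node_set NoDup_uniq; split=> -[u h]; split=> //.
  by apply/allP => j /In_mem /h /ltP.
by move=> j /In_mem /(allP h) /ltP.
Qed.

Lemma List_map_eq_In {A : Type} {f g : A -> nat} {l} :
  List.map f l = List.map g l -> forall j, List.In j l -> f j = g j.
Proof. elim: l => //= x l IH [e1 e2] j [<-|h] //; exact: IH. Qed.

Lemma exists_decoder (X : eqType) (Y : Type) (B : nat) (P : nat -> X) (Q : nat -> Y) :
  (forall m m', m < B -> m' < B -> P m = P m' -> Q m = Q m') ->
  exists r : X -> Y, forall m, m < B -> r (P m) = Q m.
Proof.
move=> h; exists (fun y => Q (nth 0 (iota 0 B) (find (fun m => P m == y) (iota 0 B)))).
move=> m mB.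
have hs : has (fun m' => P m' == P m) (iota 0 B) by apply/hasP; exists m; rewrite ?mem_iota.
have := nth_find 0 hs; move: hs; rewrite has_find size_iota => hs.
by rewrite nth_iota // add0n => /eqP e; apply: h.
Qed.

(* Files, node contents and helper messages are enumerated by their rank in [enum]. *)
Lemma repair_scheme_of_encoder {Msg C G : finType} (m0 : Msg) {n k d Bt : nat}
    (enc : nat -> Msg -> C) :
  (forall K, node_set n K -> length K = k -> forall x y : Msg,
      (forall j, List.In j K -> enc j x = enc j y) -> x = y) ->
  (forall i H, (i < n)%coq_nat -> node_set n H -> length H = d -> ~ List.In i H ->
     exists rep : nat -> C -> G, (forall j, #|[set rep j c | c in C]| <= Bt) /\
       forall x y : Msg, (forall j, List.In j H -> rep j (enc j x) = rep j (enc j y)) ->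
         enc i x = enc i y) ->
  repair_scheme n k d #|Msg| #|C| Bt.
Proof.
move=> hrec hrep.
pose mdec m := nth m0 (enum Msg) m.
pose cenc (c : C) := index c (enum C).
have cencK c c' : cenc c = cenc c' -> c = c'.
  by rewrite /cenc => e; rewrite -(nth_index c (mem_enum C c)) -(nth_index c (mem_enum C c')) e.
have mdecI m m' : m < #|Msg| -> m' < #|Msg| -> mdec m = mdec m' -> m = m'.
  rewrite /mdec => hm hm' e; apply/eqP.
  by rewrite -(nth_uniq m0 _ _ (enum_uniq Msg)) -?cardT // e.
exists (fun i m => cenc (enc i (mdec m))); split; [|split].
- by move=> i m _ _; apply/ltP; rewrite /cenc cardT index_mem mem_enum.
- move=> K hK hl.
  have [|r hr] := @exists_decoder _ _ #|Msg|
    (fun m => List.map (fun j => cenc (enc j (mdec m))) K) id.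
    move=> m m' hm hm' e; apply: mdecI => //; apply: (hrec K hK hl) => j hj.
    by apply: cencK; exact: (List_map_eq_In e j hj).
  by exists r => m /ltP; apply: hr.
- move=> i H hi hH hl hni.
  have [rep [hc hd]] := hrep i H hi hH hl hni.
  pose cdec x := nth (enc 0 m0) (enum C) x.
  pose g j x := index (rep j (cdec x)) (enum [set rep j c | c in C]).
  have gI j c c' : g j (cenc c) = g j (cenc c') -> rep j c = rep j c'.
    rewrite /g /cdec /cenc !nth_index ?mem_enum // => e.
    have h1 : rep j c \in enum [set rep j c | c in C] by rewrite mem_enum imset_f.
    have h2 : rep j c' \in enum [set rep j c | c in C] by rewrite mem_enum imset_f.
    by rewrite -(nth_index (rep j c) h1) -(nth_index (rep j c) h2) e.
  have [|r hr] := @exists_decoder _ _ #|Msg|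
    (fun m => List.map (fun j => g j (cenc (enc j (mdec m)))) H)
    (fun m => cenc (enc i (mdec m))).
    move=> m m' hm hm' e; congr cenc; apply: hd => j hj; apply: gI.
    exact: (List_map_eq_In e j hj).
  exists g, r; split; last by move=> m /ltP; apply: hr.
  move=> j x; apply/ltP; apply: leq_trans (hc j); rewrite cardE index_mem mem_enum.
  exact: imset_f.
Qed.

Local Open Scope ring_scope.

Lemma natr_Fp_inj (p n : nat) : prime p -> (n <= p)%N ->
  forall i j, (i < n)%N -> (j < n)%N -> (i%:R : 'F_p) = j%:R -> i = j.
Proof.
move=> pr np i j hi hj /(congr1 (@nat_of_ord _)); rewrite !val_Fp_nat // !modn_small //.
  exact: leq_trans hj np.
exact: leq_trans hi np.
Qed.

Lemma coef_eq0_of_roots {F : idomainType} {N T : nat} (u : 'I_N -> F) {xs : seq F} :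
  (forall a : 'I_N, (T <= a)%N -> u a = 0) -> uniq xs -> (T <= size xs)%N ->
  (forall x, x \in xs -> \sum_(a < N) u a * x ^+ a = 0) -> forall a, u a = 0.
Proof.
move=> hT hu hs hx a.
pose v i : F := if insub i is Some b then u b else 0.
have v_ord (b : 'I_N) : v b = u b by rewrite /v valK.
pose p : {poly F} := \poly_(i < N) v i.
have cp (i : 'I_N) : p`_i = u i by rewrite coef_poly ltn_ord v_ord.
have [p0|pn0] := eqVneq p 0; first by rewrite -cp p0 coef0.
have sz : (size p <= T)%N.
  apply/leq_sizeP => j hj; rewrite coef_poly; case: ltnP => // jN.
  by rewrite /v insubT /=; apply: hT.
have rt : all (root p) xs.
  apply/allP => x /hx h; rewrite /root horner_poly -[X in _ == X]h.
  by apply/eqP; apply: eq_bigr => i _; rewrite v_ord.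
by have := leq_trans (max_poly_roots pn0 rt hu) sz; rewrite ltnNge hs.
Qed.

End SchemeBasics.

Module CutSet.
Import all_boot zify.
Import SchemeBasics.
Local Close Scope R_scope.
Local Open Scope nat_scope.

Lemma Nat_minE a b : Nat.min a b = minn a b.
Proof.
case: (leqP a b) => h; first by rewrite PeanoNat.Nat.min_l //; apply/leP.
by rewrite PeanoNat.Nat.min_r //; apply/leP; exact: ltnW.
Qed.

Fixpoint words (L N : nat) : seq (seq nat) :=
  if L is L'.+1 then [seq x :: s | x <- iota 0 N, s <- words L' N] else [:: [::]].

Lemma size_words L N : size (words L N) = N ^ L.
Proof. by elim: L => //= L IH; rewrite size_allpairs size_iota IH expnS. Qed.

Lemma mem_words L N s : size s = L -> all (fun x => x < N) s -> s \in words L N.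
Proof.
elim: L s => [|L IH] [|x s] //= [hs] /andP [hx ha].
by apply/allpairsP; exists (x, s); rewrite mem_iota IH.
Qed.

Lemma size_undup_map_le_allpairs {T1 T2 T : eqType} {s : seq nat} {F : nat -> T}
    {Y : seq T1} {Z : seq T2} (G : T1 -> T2 -> T) :
  (forall m, m \in s -> exists2 y, y \in Y & exists2 z, z \in Z & F m = G y z) ->
  size (undup (map F s)) <= size Y * size Z.
Proof.
move=> h; rewrite -(size_allpairs G); apply: uniq_leq_size; first exact: undup_uniq.
move=> x; rewrite mem_undup => /mapP [m /h [y hy [z hz ->]] ->].
by apply/allpairsP; exists (y, z).
Qed.

Section CutSetBound.

Variables (n k d B A Bt : nat) (f : nat -> nat -> nat).
Hypotheses (kd : k <= d) (dn : d < n).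
Hypothesis node_bound :
  forall i m, (i < n)%coq_nat -> (m < B)%coq_nat -> (f i m < A)%coq_nat.
Hypothesis reconstruct : forall K, node_set n K -> length K = k ->
  exists D : list nat -> nat, forall m, (m < B)%coq_nat -> D (List.map (fun j => f j m) K) = m.
Hypothesis repair : forall i H, (i < n)%coq_nat -> node_set n H -> length H = d ->
  ~ List.In i H -> exists (g : nat -> nat -> nat) (r : list nat -> nat),
    (forall j x, (g j x < Bt)%coq_nat) /\
    forall m, (m < B)%coq_nat -> r (List.map (fun j => g j (f j m)) H) = f i m.

Let prefix j m := [seq f i m | i <- iota 0 j].
Let prefixes j := undup [seq prefix j m | m <- iota 0 B].

Lemma prefixS j m : prefix j.+1 m = rcons (prefix j m) (f j m).
Proof. by rewrite /prefix -addn1 iotaD map_cat cats1. Qed.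

Lemma size_prefixesS_node j : j < n -> size (prefixes j.+1) <= size (prefixes j) * A.
Proof.
move=> jn; rewrite /prefixes -(size_iota 0 A).
apply: (size_undup_map_le_allpairs (@rcons nat)) => m; rewrite mem_iota => /andP [_ hm].
exists (prefix j m); first by rewrite mem_undup map_f // mem_iota.
exists (f j m); last exact: prefixS.
by rewrite mem_iota /=; apply/ltP/node_bound; apply/ltP.
Qed.

Let helpers j := List.seq 0 j ++ List.seq j.+1 (d - j).

Lemma helpers_node_set j : j < k -> node_set n (helpers j).
Proof.
move=> jk; apply/node_setP; rewrite /helpers !List_seqE; split.
  rewrite cat_uniq !iota_uniq /= andbT.
  by apply/hasP => -[x]; rewrite !mem_iota => /andP [h1 _] /andP [_ h2]; lia.
by rewrite all_cat; apply/andP; split; apply/allP => x; rewrite mem_iota; lia.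
Qed.

Lemma size_prefixesS_repair j :
  j < k -> size (prefixes j.+1) <= size (prefixes j) * Bt ^ (d - j).
Proof.
move=> jk.
have [g [r [hg hr]]] := repair j (helpers j) ltac:(lia) (helpers_node_set j jk)
  ltac:(rewrite /helpers List.length_app !List.length_seq; lia)
  ltac:(move/In_mem; rewrite /helpers !List_seqE mem_cat !mem_iota; lia).
rewrite /prefixes -(size_words (d - j) Bt).
apply: (size_undup_map_le_allpairs
  (fun y z => rcons y (r (List.map (fun i => g i (nth 0 y i)) (List.seq 0 j) ++ z)))).
move=> m; rewrite mem_iota => /andP [_ hm].
exists (prefix j m); first by rewrite mem_undup map_f // mem_iota.
exists (List.map (fun i => g i (f i m)) (List.seq j.+1 (d - j))).
  apply: mem_words; first by rewrite -List_lengthE List.length_map List.length_seq.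
  by apply/allP => x; rewrite List_mapE => /mapP [y _ ->]; apply/ltP.
rewrite prefixS -hr; last exact/ltP.
congr (rcons _ (r _)); rewrite /helpers List.map_app; congr List.app.
rewrite !List_mapE List_seqE; apply/eq_in_map => i; rewrite mem_iota add0n => /andP [_ hi].
by rewrite /prefix (nth_map 0) ?size_iota // nth_iota.
Qed.

Lemma size_prefixes_le j :
  j <= k -> size (prefixes j) <= prodn (fun j => Nat.min A (Nat.pow Bt (Nat.sub d j))) j.
Proof.
elim: j => [_|j IH jk] /=.
  apply: (@leq_trans (size [:: [::] : seq nat])) => //.
  apply: uniq_leq_size; first exact: undup_uniq.
  by move=> x; rewrite mem_undup => /mapP [m _ ->]; rewrite inE.
have step : size (prefixes j.+1) <= size (prefixes j) * minn A (Bt ^ (d - j)).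
  have := size_prefixesS_node j ltac:(lia); have := size_prefixesS_repair j jk.
  by case: (leqP A (Bt ^ (d - j))).
rewrite Nat_minE Nat_powE minusE -mulnE; apply: leq_trans step _.
by rewrite leq_mul2r IH ?orbT // ltnW.
Qed.

Lemma size_prefixes_files : size (prefixes k) = B.
Proof.
have hK : node_set n (List.seq 0 k).
  by split; [exact: List.seq_NoDup | move=> x /List.in_seq; lia].
have [D hD] := reconstruct _ hK (List.length_seq _ _).
have e m : m < B -> D (prefix k m) = m.
  by move=> /ltP /hD; rewrite List_mapE List_seqE.
rewrite /prefixes undup_id; first by rewrite size_map size_iota.
rewrite map_inj_in_uniq ?iota_uniq // => m m'; rewrite !mem_iota => hm hm' he.
by rewrite -(e m) ?he ?e //; lia.
Qed.

End CutSetBound.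

Lemma repair_scheme_cutset {n k d B A Bt : nat} : (k <= d)%coq_nat -> (d < n)%coq_nat ->
  repair_scheme n k d B A Bt ->
  (B <= prodn (fun j => Nat.min A (Nat.pow Bt (Nat.sub d j))) k)%coq_nat.
Proof.
move=> /leP kd /ltP dn [f [hf [hrec hrep]]]; apply/leP.
rewrite -(@size_prefixes_files n k d B f kd dn hrec).
exact: (@size_prefixes_le n k d B A Bt f kd dn hf hrep k (leqnn k)).
Qed.

End CutSet.

Module ProductMatrix.
Import all_boot all_algebra zify.
Import GRing.Theory SchemeBasics.
Local Close Scope R_scope.
Local Open Scope nat_scope.

Lemma sum_indicator_ge a d : \sum_(0 <= b < d) (if a <= b then 1 else 0) = d - a.
Proof.
elim: d => [|d IH]; first by rewrite big_geq.
by rewrite big_nat_recr //= IH; case: leqP; lia.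
Qed.

Lemma mbr_file_sizeE d k : mbr_file_size d k = \sum_(0 <= a < k) (d - a).
Proof. by elim: k => [|k IH]; [rewrite big_geq | rewrite big_nat_recr //= IH]. Qed.

(* The free entries [(a, b)], [a <= b], of a symmetric [d x d] matrix vanishing outside
   its first [k] rows and columns. *)
Definition mbr_index (k d : nat) := {ab : 'I_d * 'I_d | (ab.1 <= ab.2) && (ab.1 < k)}.

Lemma card_mbr_index k d : k <= d -> #|{: mbr_index k d}| = mbr_file_size d k.
Proof.
move=> kd; rewrite card_sig -sum1_card big_mkcond /=.
rewrite -(pair_bigA _ (fun a b : 'I_d => if (a <= b) && (a < k) then 1 else 0)) /=.
transitivity (\sum_(a < d) (if a < k then d - a else 0)).
  apply: eq_bigr => a _; case: (ltnP a k) => ha.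
    by rewrite -sum_indicator_ge big_mkord; apply: eq_bigr => b _; rewrite andbT.
  by apply: big1 => b _; rewrite andbF.
rewrite -(big_mkord xpredT (fun a => if a < k then d - a else 0)).
rewrite (@big_cat_nat _ _ _ k 0 d _ _ (leq0n k) kd) /= [X in _ + X]big1_seq ?addn0; last first.
  by move=> a /andP [_]; rewrite mem_index_iota => /andP [ha _]; rewrite ltnNge ha.
by rewrite mbr_file_sizeE; apply: eq_big_nat => a /andP [_ ->].
Qed.

Local Open Scope ring_scope.

Section ProductMatrixCode.

Variables (F : finFieldType) (k d : nat).

Definition mbr_matrix (m : {ffun mbr_index k d -> F}) (a b : 'I_d) : F :=
  if @insub _ _ (mbr_index k d) (a, b) is Some z then m z
  else if @insub _ _ (mbr_index k d) (b, a) is Some z then m z else 0.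

Lemma mbr_matrixC m a b : mbr_matrix m a b = mbr_matrix m b a.
Proof.
rewrite /mbr_matrix; case: (@insubP _ _ (mbr_index k d) (a, b)) => [z hz ez|nz];
  case: (@insubP _ _ (mbr_index k d) (b, a)) => [z' hz' ez'|nz'] //.
have eab : a = b.
  move: hz hz' => /= /andP [h1 _] /andP [h2 _]; apply: val_inj; apply/eqP.
  by rewrite eqn_leq h1 h2.
by subst b; congr (m _); apply: val_inj; rewrite ez ez'.
Qed.

Lemma mbr_matrix_eq0 m (a b : 'I_d) : (k <= a)%N -> (k <= b)%N -> mbr_matrix m a b = 0.
Proof. by move=> ha hb; rewrite /mbr_matrix !insubF //= ltnNge ?ha ?hb andbF. Qed.

Lemma mbr_matrix_val m (z : mbr_index k d) : mbr_matrix m (val z).1 (val z).2 = m z.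
Proof. by rewrite /mbr_matrix -surjective_pairing valK. Qed.

(* Columns [b >= k] have degree [< k] as polynomials; by symmetry, so do all others. *)
Lemma sym_matrix_eq0_of_roots (c : 'I_d -> 'I_d -> F) {xs : seq F} :
  (forall a b, c a b = c b a) -> (forall a b : 'I_d, (k <= a)%N -> (k <= b)%N -> c a b = 0) ->
  uniq xs -> (k <= size xs)%N ->
  (forall x, x \in xs -> forall b, \sum_(a < d) c a b * x ^+ a = 0) -> forall a b, c a b = 0.
Proof.
move=> hsym hz hu hs hsum.
have hcol (b : 'I_d) : (k <= b)%N -> forall a, c a b = 0.
  move=> hb; apply: (coef_eq0_of_roots (T := k) (xs := xs) (fun a => c a b)) => //.
    by move=> a ha; exact: hz.
  by move=> x hx; exact: hsum.
move=> a b; case: (leqP k b) => hb; first exact: hcol.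
apply: (coef_eq0_of_roots (T := k) (xs := xs) (fun a => c a b)) => //; last by move=> x /hsum.
by move=> a' ha'; rewrite hsym; exact: hcol.
Qed.

Variables (x : nat -> F) (n : nat).
Hypothesis x_inj : forall i j, (i < n)%N -> (j < n)%N -> x i = x j -> i = j.

Lemma x_inj_in {L} : node_set n L -> {in L &, injective x}.
Proof. by move=> /node_setP [_ /allP hL] i j /hL hi /hL hj; apply: x_inj. Qed.

Definition mbr_node (j : nat) (m : {ffun mbr_index k d -> F}) : {ffun 'I_d -> F} :=
  [ffun b : 'I_d => \sum_(a < d) mbr_matrix m a b * x j ^+ a].

Lemma mbr_reconstruct K : node_set n K -> length K = k -> forall m m',
  (forall j, List.In j K -> mbr_node j m = mbr_node j m') -> m = m'.
Proof.
move=> hK hl m m' he.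
pose c a b := mbr_matrix m a b - mbr_matrix m' a b.
have hc : forall a b, c a b = 0.
  apply: (@sym_matrix_eq0_of_roots c [seq x j | j <- K]).
  - by move=> a b; rewrite /c mbr_matrixC (mbr_matrixC m').
  - by move=> a b ha hb; rewrite /c !mbr_matrix_eq0 // subrr.
  - by rewrite map_inj_in_uniq; [case/node_setP: hK | exact: x_inj_in hK].
  - by rewrite size_map -List_lengthE hl.
  move=> y /mapP [j /In_mem hj ->] b.
  have := congr1 (fun v : {ffun 'I_d -> F} => v b) (he j hj); rewrite /mbr_node !ffunE => e.
  by rewrite /c; under eq_bigr do rewrite mulrBl; rewrite sumrB e subrr.
apply/ffunP => z; rewrite -!mbr_matrix_val; apply/eqP; rewrite -subr_eq0; apply/eqP.
exact: hc.
Qed.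

(* Helper [j] sends [psi_j M psi_i]; the repaired node recovers [M psi_i = (psi_i M)^T]. *)
Lemma mbr_repair i H : node_set n H -> length H = d -> forall m m',
  (forall j, List.In j H ->
     \sum_(b < d) mbr_node j m b * x i ^+ b = \sum_(b < d) mbr_node j m' b * x i ^+ b) ->
  mbr_node i m = mbr_node i m'.
Proof.
move=> hH hl m m' he; apply/ffunP => b; rewrite /mbr_node !ffunE.
pose c a b := mbr_matrix m a b - mbr_matrix m' a b.
pose u a := \sum_(b < d) c a b * x i ^+ b.
have hu : forall a, u a = 0.
  apply: (coef_eq0_of_roots (T := d) u (xs := [seq x j | j <- H])).
  - by move=> a; rewrite leqNgt ltn_ord.
  - by rewrite map_inj_in_uniq; [case/node_setP: hH | exact: x_inj_in hH].
  - by rewrite size_map -List_lengthE hl.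
  move=> y /mapP [j /In_mem hj ->].
  have e := he j hj; rewrite /mbr_node in e.
  transitivity (\sum_(b < d) (\sum_(a < d) c a b * x j ^+ a) * x i ^+ b).
    under eq_bigr do rewrite /u big_distrl /=.
    rewrite exchange_big /=; apply: eq_bigr => b' _; rewrite big_distrl.
    by apply: eq_bigr => a _ /=; rewrite mulrAC.
  rewrite -[RHS](subrr (\sum_(b < d)
    [ffun b => \sum_(a < d) mbr_matrix m' a b * x j ^+ a] b * x i ^+ b)).
  rewrite -{1}e -sumrB; apply: eq_bigr => b' _; rewrite !ffunE -mulrBl -sumrB.
  by congr (_ * _); apply: eq_bigr => a _; rewrite mulrBl.
apply/eqP; rewrite -subr_eq0 -sumrB; apply/eqP; rewrite -[RHS](hu b) /u.
by apply: eq_bigr => a _; rewrite -mulrBl /c (mbr_matrixC m) (mbr_matrixC m').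
Qed.

Lemma mbr_scheme :
  repair_scheme n k d #|{ffun mbr_index k d -> F}| #|{ffun 'I_d -> F}| #|F|.
Proof.
apply: (repair_scheme_of_encoder [ffun => 0] mbr_node).
  by move=> K hK hl; apply: mbr_reconstruct.
move=> i H _ hH hl _.
exists (fun (j : nat) (v : {ffun 'I_d -> F}) => \sum_(b < d) v b * x i ^+ b).
by split; [move=> j; apply: max_card | apply: mbr_repair].
Qed.

End ProductMatrixCode.

Lemma mbr_schemes_large_prime n k d : (k <= d)%coq_nat ->
  forall m, exists p, (m < p)%coq_nat /\ (2 <= p)%coq_nat /\
    repair_scheme n k d (Nat.pow p (mbr_file_size d k)) (Nat.pow p d) p.
Proof.
move=> /leP kd m.
have [p hp pr] := prime_above (maxn m n).
exists p; split; first by apply/ltP; apply: leq_ltn_trans hp; exact: leq_maxl.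
split; first exact/leP/prime_gt1.
have := @mbr_scheme 'F_p k d (fun j => j%:R) n.
rewrite card_ffun card_mbr_index // card_ffun !card_ord (Fp_cast pr) !Nat_powE; apply=> //.
apply: natr_Fp_inj => //; apply: ltnW; apply: leq_ltn_trans hp; exact: leq_maxr.
Qed.

End ProductMatrix.

Module Colouring.
Import all_boot all_algebra zify.
Import GRing.Theory SchemeBasics.
Local Close Scope R_scope.
Local Open Scope nat_scope.

Lemma size_filter_inord_ge {n' : nat} {L : seq nat} (S : {pred 'I_n'.+1}) :
  uniq L -> all (fun j => j < n'.+1) L ->
  #|S| - (n'.+1 - size L) <= size [seq j <- L | (inord j : 'I_n'.+1) \in S].
Proof.
move=> uL aL.
pose LL := [seq (inord j : 'I_n'.+1) | j <- L].
have injL : {in L &, injective (fun j => (inord j : 'I_n'.+1))}.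
  move=> i j hi hj /(congr1 (@nat_of_ord _)).
  by rewrite !inordK //; apply: (allP aL).
have uLL : uniq LL by rewrite map_inj_in_uniq.
have szL : #|[pred y | y \in LL]| = size L by rewrite (card_uniqP uLL) size_map.
have hI : #|[predI S & [pred y | y \in LL]]| = size [seq j <- L | (inord j : 'I_n'.+1) \in S].
  rewrite -(size_map (fun j => (inord j : 'I_n'.+1))) -filter_map.
  rewrite -(card_uniqP (filter_uniq _ uLL)); apply: eq_card => y.
  by rewrite !inE mem_filter.
have hD : #|[predD S & [pred y | y \in LL]]| <= #|[predC [pred y | y \in LL]]|.
  by apply: subset_leq_card; apply/subsetP => y; rewrite !inE => /andP [].
have hC : #|[predC [pred y | y \in LL]]| = n'.+1 - size L.
  by have := cardC [pred y | y \in LL]; rewrite card_ord szL; move: #|[predC _]| => C; lia.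
by rewrite -(cardID [pred y | y \in LL] S) hI leq_subLR addnC leq_add2r -hC.
Qed.

Lemma card_ffun_eq_at (q n' : nat) (i0 j0 : 'I_n'.+1) : i0 != j0 -> 0 < q ->
  #|[pred h : {ffun 'I_n'.+1 -> 'I_q} | h j0 == h i0]| <= q ^ n'.
Proof.
move=> nij q0.
pose A := {h : {ffun 'I_n'.+1 -> 'I_q} | h j0 == h i0}.
pose f (p : A * 'I_q) : {ffun 'I_n'.+1 -> 'I_q} :=
  [ffun y => if y == j0 then p.2 else val p.1 y].
have fi : injective f.
  move=> [[h hh] c] [[h' hh'] c'] e.
  have ec : c = c' by have := congr1 (fun g : {ffun _ -> _} => g j0) e; rewrite /f !ffunE eqxx.
  have ey y : y != j0 -> h y = h' y.
    move=> ny; have := congr1 (fun g : {ffun _ -> _} => g y) e.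
    by rewrite /f !ffunE /= (negbTE ny).
  subst c'; congr pair; apply: val_inj => /=; apply/ffunP => y.
  case: (eqVneq y j0) => [->|ny]; last exact: ey.
  by rewrite (eqP hh) (eqP hh'); exact: (ey _ nij).
have := leq_card f fi; rewrite card_prod card_sig !card_ffun !card_ord expnS => h.
by rewrite -(leq_pmul2r q0) [X in _ <= X]mulnC.
Qed.

Lemma sum_indicator_lt t N : t <= N -> \sum_(u < N) (if u < t then 1 else 0) = t.
Proof.
move=> tN; rewrite -(big_mkord xpredT (fun u => if u < t then 1 else 0)).
rewrite (@big_cat_nat _ _ _ t 0 N _ _ (leq0n t) tN) /= [X in _ + X]big1_seq ?addn0.
  rewrite (eq_big_nat _ _ (F2 := fun=> 1)) ?sum_nat_const_nat ?muln1 ?subn0 //.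
  by move=> a /andP [_ ->].
by move=> a /andP [_]; rewrite mem_index_iota => /andP [ha _]; rewrite ltnNge ha.
Qed.

Lemma sum_card_fibres {n' q : nat} (h : {ffun 'I_n'.+1 -> 'I_q}) :
  \sum_(c < q) #|[pred y | h y == c]| = n'.+1.
Proof.
transitivity (\sum_(c < q) \sum_(y : 'I_n'.+1) (if h y == c then 1 else 0)).
  by apply: eq_bigr => c _; rewrite -sum1_card big_mkcond.
rewrite exchange_big /= -[RHS]card_ord -sum1_card; apply: eq_bigr => y _.
by rewrite -big_mkcond /= (eq_bigl (fun c => c == h y)) ?big_pred1_eq // => c; rewrite eq_sym.
Qed.

(* A colouring [h] of the [n'.+1] nodes with [q] colours carries, for each colour [c], a
   Reed-Solomon block of length [#|h^-1 c| - a]. *)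
Definition block_len {n' q : nat} (a : nat) (h : {ffun 'I_n'.+1 -> 'I_q}) (c : 'I_q) :=
  #|[pred y | h y == c]| - a.

Definition colouring_index (n' q a : nat) :=
  {z : ({ffun 'I_n'.+1 -> 'I_q} * 'I_q) * 'I_n'.+1 | z.2 < block_len a z.1.1 z.1.2}.

Lemma card_colouring_index_ge (n' q a : nat) :
  n'.+1 * q ^ n'.+1 <= #|{: colouring_index n' q a}| + q ^ n'.+1 * (q * a).
Proof.
have e1 : #|{: colouring_index n' q a}|
    = \sum_(h : {ffun 'I_n'.+1 -> 'I_q}) \sum_(c < q) block_len a h c.
  rewrite card_sig -sum1_card big_mkcond /=.
  rewrite -(pair_bigA _ (fun (hc : {ffun 'I_n'.+1 -> 'I_q} * 'I_q) (u : 'I_n'.+1) =>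
                            if u < block_len a hc.1 hc.2 then 1 else 0)) /=.
  rewrite -(pair_bigA _ (fun h c => \sum_(u < n'.+1) if u < block_len a h c then 1 else 0)).
  apply: eq_bigr => h _; apply: eq_bigr => c _; apply: sum_indicator_lt.
  by apply: leq_trans (leq_subr _ _) _; apply: leq_trans (max_card _) _; rewrite card_ord.
have e2 : q ^ n'.+1 = #|{ffun 'I_n'.+1 -> 'I_q}| by rewrite card_ffun !card_ord.
rewrite e1 e2 -sum1_card big_distrr big_distrl /= -big_split /= leq_sum // => h _.
rewrite muln1 mul1n -{1}(sum_card_fibres h).
have -> : q * a = \sum_(c < q) a by rewrite sum_nat_const card_ord.
rewrite -big_split leq_sum // => c _.
by rewrite /block_len /=; lia.
Qed.

Local Open Scope ring_scope.

Section ColouringCode.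

Variables (F : finFieldType) (n' q a : nat).
Let N := n'.+1.
Let colouring := {ffun 'I_N -> 'I_q}.

Definition colouring_coef (m : {ffun colouring_index n' q a -> F})
    (h : colouring) (c : 'I_q) (u : 'I_N) : F :=
  if @insub _ _ (colouring_index n' q a) (h, c, u) is Some z then m z else 0.

Lemma colouring_coef_val m (z : colouring_index n' q a) :
  colouring_coef m (val z).1.1 (val z).1.2 (val z).2 = m z.
Proof. by rewrite /colouring_coef -!surjective_pairing valK. Qed.

Lemma colouring_coef_eq0 m h c (u : 'I_N) : (block_len a h c <= u)%N -> colouring_coef m h c u = 0.
Proof. by move=> hu; rewrite /colouring_coef insubF //= ltnNge hu. Qed.

Variable x : nat -> F.
Hypothesis x_inj : forall i j, (i < N)%N -> (j < N)%N -> x i = x j -> i = j.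

Lemma colouring_block_eq {m m' : {ffun colouring_index n' q a -> F}} {h c} {L : seq nat} :
  node_set N L ->
  (block_len a h c <= #|[pred y | h y == c]| - (N - size L))%N ->
  (forall j, j \in L -> h (inord j) == c ->
     \sum_(u < N) colouring_coef m h c u * x j ^+ u =
     \sum_(u < N) colouring_coef m' h c u * x j ^+ u) ->
  forall u, colouring_coef m h c u = colouring_coef m' h c u.
Proof.
move=> /node_setP [uL aL] hsz hv u; apply/eqP; rewrite -subr_eq0; apply/eqP; move: u.
apply: (coef_eq0_of_roots (T := block_len a h c) (xs := [seq x j | j <- L & h (inord j) == c])
  (fun u => colouring_coef m h c u - colouring_coef m' h c u)).
- by move=> u hu; rewrite !colouring_coef_eq0 // subrr.
- rewrite map_inj_in_uniq ?filter_uniq // => i j.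
  by rewrite !mem_filter => /andP [_ /(allP aL) hi] /andP [_ /(allP aL) hj]; apply: x_inj.
- rewrite size_map; apply: leq_trans hsz _.
  exact: (size_filter_inord_ge [pred y | h y == c] uL aL).
- move=> y /mapP [j]; rewrite mem_filter => /andP [hc hj] ->.
  by under eq_bigr do rewrite mulrBl; rewrite sumrB hv // subrr.
Qed.

Definition colouring_node (j : nat) (m : {ffun colouring_index n' q a -> F}) :
    {ffun colouring -> F} :=
  [ffun h => \sum_(u < N) colouring_coef m h (h (inord j)) u * x j ^+ u].

Lemma colouring_reconstruct {k K} : a = (N - k)%N -> node_set N K -> length K = k ->
  forall m m', (forall j, List.In j K -> colouring_node j m = colouring_node j m') -> m = m'.
Proof.
move=> ea hK hl m m' he; apply/ffunP => z; rewrite -!colouring_coef_val.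
apply: (colouring_block_eq hK); first by rewrite -List_lengthE hl -ea.
move=> j /In_mem hj /eqP hc.
have := congr1 (fun v : {ffun _ -> F} => v (val z).1.1) (he j hj).
by rewrite /colouring_node !ffunE hc.
Qed.

(* The first branch never applies to a helper [j]; it only bounds the image for every [j]. *)
Definition colouring_helper (i j : nat) (v : {ffun colouring -> F}) : {ffun colouring -> F} :=
  if (inord j : 'I_N) == inord i then [ffun => 0]
  else [ffun h : colouring => if h (inord j) == h (inord i) then v h else 0].

Lemma card_colouring_helper i j : (0 < q)%N ->
  (#|[set colouring_helper i j v | v in {ffun colouring -> F}]| <= #|F| ^ (q ^ n'))%N.
Proof.
move=> q0; rewrite /colouring_helper; case: eqP => hji.
  apply: leq_trans (_ : 1 <= _)%N; last first.
    by rewrite expn_gt0; apply/orP; left; apply/card_gt0P; exists 0.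
  rewrite -(cards1 ([ffun => 0] : {ffun colouring -> F})).
  by apply: subset_leq_card; apply/subsetP => y /imsetP [v _ ->]; rewrite inE.
pose D := [pred h : colouring | h (inord j) == h (inord i)].
apply: (@leq_trans #|pffun_on (0 : F) D predT|).
  apply: subset_leq_card; apply/subsetP => y /imsetP [v _ ->].
  apply/pffun_onP; split=> [|w _ //].
  by apply/subsetP => h; rewrite !inE ffunE; case: ifP => // _; rewrite eqxx.
rewrite card_pffun_on; apply: leq_pexp2l; first by apply/card_gt0P; exists 0.
by apply: card_ffun_eq_at => //; apply/eqP => e; apply: hji; rewrite e.
Qed.

(* Symbol [h] of node [i] lies in the block of colour [h i]; at least
   [#|h^-1 (h i)| - 1 - (N - 1 - d) >= block_len] helpers share that colour. *)
Lemma colouring_repair {k d i H} : a = (N - k)%N -> (k <= d)%N -> (i < N)%N ->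
  node_set N H -> length H = d -> ~ List.In i H ->
  forall m m', (forall j, List.In j H ->
      colouring_helper i j (colouring_node j m) = colouring_helper i j (colouring_node j m')) ->
  colouring_node i m = colouring_node i m'.
Proof.
move=> ea kd hi hH hl hni m m' he; apply/ffunP => h; rewrite /colouring_node !ffunE.
apply: eq_bigr => u _; congr (_ * _); apply: (colouring_block_eq hH).
  by rewrite -List_lengthE hl /block_len ea; apply: leq_sub2l; lia.
move=> j hj' hc.
have hjN : (j < N)%N by case/node_setP: hH => _ /allP; apply.
have hji : (inord j : 'I_N) != inord i.
  apply/eqP => /(congr1 (@nat_of_ord _)); rewrite !inordK // => ej.
  by apply: hni; apply/In_mem; rewrite -ej.
have := congr1 (fun v : {ffun _ -> F} => v h) (he j (iffRL (In_mem _ _) hj')).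
by rewrite /colouring_helper (negbTE hji) !ffunE hc (eqP hc).
Qed.

Lemma colouring_scheme k d : (k <= d)%N -> (0 < q)%N -> a = (N - k)%N ->
  repair_scheme N k d #|{ffun colouring_index n' q a -> F}| #|{ffun colouring -> F}|
    (#|F| ^ (q ^ n')).
Proof.
move=> kd q0 ea.
apply: (repair_scheme_of_encoder [ffun => 0] colouring_node).
  by move=> K hK hl; apply: colouring_reconstruct ea hK hl.
move=> i H /ltP hi hH hl hni; exists (colouring_helper i).
by split=> [j|]; [apply: card_colouring_helper | apply: colouring_repair ea kd hi hH hl hni].
Qed.

End ColouringCode.

Lemma colouring_schemes_large_prime n' k d q :
  (k <= d)%coq_nat -> (0 < q)%coq_nat ->
  exists Z, (n'.+1 * Nat.pow q n'.+1 <= Z + Nat.pow q n'.+1 * (q * (n'.+1 - k)))%coq_nat /\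
  forall m, exists p, (m < p)%coq_nat /\ (2 <= p)%coq_nat /\
    repair_scheme n'.+1 k d (Nat.pow p Z) (Nat.pow p (Nat.pow q n'.+1)) (Nat.pow p (Nat.pow q n')).
Proof.
move=> /leP kd /ltP q0.
exists #|{: colouring_index n' q (n'.+1 - k)}|; split.
  by apply/leP; rewrite !Nat_powE; exact: card_colouring_index_ge.
move=> m; have [p hp pr] := prime_above (maxn m n'.+1).
exists p; split; first by apply/ltP; apply: leq_ltn_trans hp; exact: leq_maxl.
split; first exact/leP/prime_gt1.
have := @colouring_scheme 'F_p n' q (n'.+1 - k) (fun j => j%:R) _ k d kd q0 erefl.
rewrite !card_ffun !card_ord (Fp_cast pr) !Nat_powE; apply.
apply: natr_Fp_inj => //; apply: ltnW; apply: leq_ltn_trans hp; exact: leq_maxr.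
Qed.

End Colouring.

Lemma exact_repair_codeE n k d alpha gamma l B :
  exact_repair_code n k d alpha gamma l B <->
  exists A Bt, INR A <= Rpower 2 (INR l * alpha) /\
    INR Bt <= Rpower 2 (INR l * (gamma / INR d)) /\ repair_scheme n k d B A Bt.
Proof.
  split.
  - intros (A & Bt & f & hA & hBt & hcode). exists A, Bt. split; [|split]; auto. now exists f.
  - intros (A & Bt & hA & hBt & f & hcode). now exists A, Bt, f.
Qed.

Lemma fold_right_Rplus_shift (l : list R) c : fold_right Rplus c l = fold_right Rplus 0 l + c.
Proof. induction l as [|x l IH]; simpl; [lra | rewrite IH; lra]. Qed.

Lemma fold_right_Rplus_scal (t : R) (f : nat -> R) (s : list nat) :
  fold_right Rplus 0 (map (fun j => t * f j) s) = t * fold_right Rplus 0 (map f s).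
Proof. induction s as [|y s IH]; simpl; [ring | rewrite IH; ring]. Qed.

Lemma C_func_S k d alpha gamma :
  C_func (S k) d alpha gamma
  = C_func k d alpha gamma + Rmin alpha ((INR d - INR k) / INR d * gamma).
Proof.
  unfold C_func. rewrite seq_S, map_app, fold_right_app. simpl.
  rewrite fold_right_Rplus_shift. lra.
Qed.

Lemma C_func_term_nonneg j d alpha gamma : (j <= d)%nat -> 0 <= alpha -> 0 <= gamma ->
  0 <= Rmin alpha ((INR d - INR j) / INR d * gamma).
Proof.
  intros jd ha hg. apply Rmin_glb; [lra|].
  assert (INR j <= INR d) by (apply le_INR; lia).
  destruct (Nat.eq_dec d 0) as [->|d0]; [simpl; unfold Rdiv; rewrite Rinv_0; lra|].
  assert (0 < INR d) by (apply lt_0_INR; lia).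
  apply Rmult_le_pos; [apply Rdiv_le_0_compat|]; lra.
Qed.

Lemma C_func_nonneg k d alpha gamma : (k <= d)%nat -> 0 <= alpha -> 0 <= gamma ->
  0 <= C_func k d alpha gamma.
Proof.
  intros kd ha hg. induction k as [|k IH]; [unfold C_func; simpl; lra|].
  rewrite C_func_S. pose proof (C_func_term_nonneg k d alpha gamma ltac:(lia) ha hg).
  specialize (IH ltac:(lia)). lra.
Qed.

Lemma C_func_pos k d alpha gamma : (1 <= k)%nat -> (k <= d)%nat -> 0 < alpha -> 0 < gamma ->
  0 < C_func k d alpha gamma.
Proof.
  intros hk kd ha hg. destruct k as [|k]; [lia|]. rewrite C_func_S.
  pose proof (C_func_nonneg k d alpha gamma ltac:(lia) ltac:(lra) ltac:(lra)).
  assert (0 < INR d) by (apply lt_0_INR; lia).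
  assert (INR k < INR d) by (apply lt_INR; lia).
  assert (0 < (INR d - INR k) / INR d * gamma)
    by (apply Rmult_lt_0_compat; [apply Rdiv_lt_0_compat|]; lra).
  unfold Rmin. destruct Rle_dec; lra.
Qed.

Lemma C_func_le k d alpha gamma : C_func k d alpha gamma <= INR k * alpha.
Proof.
  induction k as [|k IH]; [unfold C_func; simpl; lra|].
  rewrite C_func_S, S_INR. pose proof (Rmin_l alpha ((INR d - INR k) / INR d * gamma)). lra.
Qed.

Lemma C_func_alpha k d alpha : (k <= d)%nat -> (0 < d)%nat -> 0 < alpha ->
  C_func k d alpha alpha = INR (mbr_file_size d k) * alpha / INR d.
Proof.
  intros kd d0 ha. assert (hd : 0 < INR d) by (apply lt_0_INR; lia).
  induction k as [|k IH]; [unfold C_func; simpl; field; lra|].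
  rewrite C_func_S, IH by lia. simpl mbr_file_size. rewrite plus_INR, minus_INR by lia.
  rewrite Rmin_right; [field; lra|].
  assert (0 <= INR k) by apply pos_INR.
  apply Rle_trans with (INR d / INR d * alpha); [|right; field; lra].
  apply Rmult_le_compat_r; [lra|]. apply Rmult_le_compat_r; [|lra].
  left; apply Rinv_0_lt_compat; lra.
Qed.

Lemma ln2_pos : 0 < ln 2.
Proof. rewrite <- ln_1. apply ln_increasing; lra. Qed.

Lemma ln_INR_le_of_Rpower2 (A : nat) t :
  (0 < A)%nat -> INR A <= Rpower 2 t -> ln (INR A) <= t * ln 2.
Proof.
  intros hA h. rewrite <- ln_Rpower. apply ln_le; [apply lt_0_INR|]; assumption.
Qed.

Lemma exp_le x y : x <= y -> exp x <= exp y.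
Proof. intros [h | ->]; [left; apply exp_increasing | right]; auto. Qed.

Lemma INR_pow_le_Rpower2 p e t :
  (0 < p)%nat -> INR e * ln (INR p) <= t * ln 2 -> INR (Nat.pow p e) <= Rpower 2 t.
Proof.
  intros hp h. rewrite pow_INR, <- Rpower_pow by (apply lt_0_INR; lia).
  unfold Rpower. apply exp_le. exact h.
Qed.

Lemma ln_prodn_le k (c : nat -> nat) (X : nat -> R) :
  (forall j, (j < k)%nat -> (0 < c j)%nat -> ln (INR (c j)) <= X j) ->
  (0 < prodn c k)%nat ->
  ln (INR (prodn c k)) <= fold_right Rplus 0 (map X (seq 0 k)).
Proof.
  induction k as [|k IH]; intros hc hp; [simpl; rewrite ln_1; lra|].
  change (prodn c (S k)) with (prodn c k * c k)%nat in *.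
  rewrite seq_S, map_app, fold_right_app. simpl.
  rewrite fold_right_Rplus_shift, mult_INR, ln_mult by (apply lt_0_INR; lia).
  pose proof (IH (fun j hj => hc j ltac:(lia)) ltac:(lia)).
  pose proof (hc k ltac:(lia) ltac:(lia)). lra.
Qed.

Lemma ln_cutset_factor_le (A Bt l d j : nat) alpha gamma :
  (j < d)%nat -> INR A <= Rpower 2 (INR l * alpha) ->
  INR Bt <= Rpower 2 (INR l * (gamma / INR d)) -> (0 < Nat.min A (Nat.pow Bt (d - j)))%nat ->
  ln (INR (Nat.min A (Nat.pow Bt (d - j))))
  <= INR l * ln 2 * Rmin alpha ((INR d - INR j) / INR d * gamma).
Proof.
  intros jd hA hBt hpos.
  assert (hBt0 : (0 < Bt)%nat).
  { destruct Bt; [rewrite Nat.pow_0_l in hpos by lia; lia | lia]. }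
  pose proof ln2_pos as hln2.
  assert (hlnBt := ln_INR_le_of_Rpower2 Bt _ hBt0 hBt).
  assert (hlnA := ln_INR_le_of_Rpower2 A _ ltac:(lia) hA).
  unfold Rmin. destruct Rle_dec as [h|h].
  - apply Rle_trans with (ln (INR A)); [apply ln_le; [apply lt_0_INR | apply le_INR]; lia | lra].
  - apply Rle_trans with (ln (INR (Nat.pow Bt (d - j)))).
    { apply ln_le; [apply lt_0_INR | apply le_INR]; lia. }
    rewrite pow_INR, ln_pow, minus_INR by (try apply lt_0_INR; lia).
    assert (INR j <= INR d) by (apply le_INR; lia).
    apply Rle_trans with ((INR d - INR j) * (INR l * (gamma / INR d) * ln 2));
      [apply Rmult_le_compat_l; lra | right; unfold Rdiv; ring].
Qed.

Lemma achievable_rate_le_C_func n k d alpha gamma x :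
  (k <= d)%nat -> (d < n)%nat -> achievable_rate n k d alpha gamma x ->
  x <= C_func k d alpha gamma.
Proof.
  intros kd dn (l & B & hl & hB & hcode & ->).
  apply exact_repair_codeE in hcode as (A & Bt & hA & hBt & hscheme).
  pose proof (CutSet.repair_scheme_cutset kd dn hscheme) as hcut.
  pose proof ln2_pos as hln2.
  assert (hlR : 0 < INR l) by (apply lt_0_INR; lia).
  assert (hprod : ln (INR B) <= INR l * ln 2 * C_func k d alpha gamma).
  { apply Rle_trans with (ln (INR (prodn (fun j => Nat.min A (Nat.pow Bt (d - j))) k))).
    { apply ln_le; [apply lt_0_INR | apply le_INR]; lia. }
    unfold C_func. rewrite <- fold_right_Rplus_scal.
    apply ln_prodn_le; [|lia].
    intros j hj hpos. apply ln_cutset_factor_le; auto; lia. }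
  apply Rmult_le_reg_l with (INR l * ln 2); [nra|].
  replace (INR l * ln 2 * (ln (INR B) / ln 2 / INR l)) with (ln (INR B)) by (field; lra).
  exact hprod.
Qed.

Lemma le_real_Lub_Rbar (E : R -> Prop) b x :
  (forall y, E y -> y <= b) -> E x -> x <= real (Lub_Rbar E).
Proof.
  intros hb hx. destruct (Lub_Rbar_correct E) as [ub lub].
  destruct (Lub_Rbar E) as [r| |];
    [exact (ub x hx) | exfalso; exact (lub (Finite b) hb) | exfalso; exact (ub x hx)].
Qed.

Lemma real_Lub_Rbar_le (E : R -> Prop) b :
  (forall y, E y -> y <= b) -> 0 <= b -> real (Lub_Rbar E) <= b.
Proof.
  intros hb h0. destruct (Lub_Rbar_correct E) as [_ lub].
  destruct (Lub_Rbar E) as [r| |];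
    [exact (lub (Finite b) hb) | exfalso; exact (lub (Finite b) hb) | exact h0].
Qed.

Lemma C_exact_le_C_func n k d alpha gamma : (k <= d)%nat -> (d < n)%nat ->
  0 <= alpha -> 0 <= gamma -> C_exact n k d alpha gamma <= C_func k d alpha gamma.
Proof.
  intros kd dn ha hg. apply real_Lub_Rbar_le; [|apply C_func_nonneg; assumption].
  intros y. exact (achievable_rate_le_C_func n k d alpha gamma y kd dn).
Qed.

Lemma exists_nat_between r : 0 < r -> exists l, (0 < l)%nat /\ r <= INR l <= r + 1.
Proof.
  intros hr. destruct (nfloor_ex r ltac:(lra)) as [m hm].
  exists (S m). rewrite S_INR. split; [lia | lra].
Qed.

(* The block length [l ~ X ln p / (alpha ln 2)] is the least one at which a node alphabet of
   size [p^X] fits into [l alpha] bits. *)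
Lemma rate_of_scheme n k d alpha gamma (Z X Y p : nat) :
  (k <= d)%nat -> (d < n)%nat -> 0 < alpha -> (0 < X)%nat -> (2 <= p)%nat ->
  INR Y * alpha <= INR X * (gamma / INR d) ->
  repair_scheme n k d (Nat.pow p Z) (Nat.pow p X) (Nat.pow p Y) ->
  INR Z * alpha * ln (INR p) / (INR X * ln (INR p) + alpha * ln 2)
  <= C_exact n k d alpha gamma.
Proof.
  intros kd dn ha hX hp hload hscheme.
  pose proof ln2_pos as hln2.
  assert (hlnp : 0 < ln (INR p)).
  { rewrite <- ln_1. apply ln_increasing; [lra | apply lt_1_INR; lia]. }
  assert (hXR : 0 < INR X) by (apply lt_0_INR; lia).
  assert (hZR : 0 <= INR Z) by apply pos_INR.
  assert (hYR : 0 <= INR Y) by apply pos_INR.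
  set (r := INR X * ln (INR p) / (alpha * ln 2)).
  assert (hr : 0 < r) by (unfold r; apply Rdiv_lt_0_compat; nra).
  assert (er : INR X * ln (INR p) = r * (alpha * ln 2)) by (unfold r; field; lra).
  destruct (exists_nat_between r hr) as (l & hl & hrl & hlr).
  apply Rle_trans with (ln (INR (Nat.pow p Z)) / ln 2 / INR l).
  - rewrite pow_INR, ln_pow, er by (apply lt_0_INR; lia).
    replace (INR Z * alpha * ln (INR p) / (r * (alpha * ln 2) + alpha * ln 2))
      with (INR Z * ln (INR p) / ln 2 / (r + 1)) by (field; repeat split; nra).
    unfold Rdiv at 2 4. apply Rmult_le_compat_l.
    + apply Rdiv_le_0_compat; nra.
    + apply Rinv_le_contravar; lra.
  - apply le_real_Lub_Rbar with (C_func k d alpha gamma).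
    { intros y. apply achievable_rate_le_C_func; assumption. }
    exists l, (Nat.pow p Z). split; [exact hl|]. split.
    { apply Nat.neq_0_lt_0, Nat.pow_nonzero. lia. }
    split; [|reflexivity].
    apply exact_repair_codeE. exists (Nat.pow p X), (Nat.pow p Y).
    split; [|split; [|exact hscheme]]; apply INR_pow_le_Rpower2; try lia.
    + rewrite er. assert (0 < alpha * ln 2) by nra. nra.
    + assert (0 <= gamma / INR d) by nra.
      apply Rmult_le_reg_r with alpha; [exact ha|].
      apply Rle_trans with (INR X * (gamma / INR d) * ln (INR p)); [nra|].
      rewrite (Rmult_comm (INR X)), Rmult_assoc, er.
      assert (0 <= gamma / INR d * (alpha * ln 2)) by (apply Rmult_le_pos; nra). nra.
Qed.

Lemma C_exact_ge_of_schemes n k d alpha gamma (Z X Y : nat) :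
  (k <= d)%nat -> (d < n)%nat -> 0 < alpha -> (0 < X)%nat ->
  INR Y * alpha <= INR X * (gamma / INR d) ->
  (forall m, exists p, (m < p)%nat /\ (2 <= p)%nat /\
     repair_scheme n k d (Nat.pow p Z) (Nat.pow p X) (Nat.pow p Y)) ->
  INR Z * alpha / INR X <= C_exact n k d alpha gamma.
Proof.
  intros kd dn ha hX hload hschemes.
  pose proof ln2_pos as hln2.
  assert (hXR : 0 < INR X) by (apply lt_0_INR; lia).
  set (v := INR Z * alpha / INR X).
  assert (hv : 0 <= v) by (unfold v; pose proof (pos_INR Z); apply Rdiv_le_0_compat; nra).
  set (c := alpha * ln 2).
  assert (hc : 0 < c) by (unfold c; nra).
  apply Rle_plus_epsilon. intros eps heps.
  set (b := v * c / (eps * INR X)).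
  assert (hb : 0 <= b) by (unfold b; apply Rdiv_le_0_compat; nra).
  destruct (INR_unbounded (exp b)) as [m hm].
  destruct (hschemes m) as (p & hmp & hp & hscheme).
  pose proof (rate_of_scheme n k d alpha gamma Z X Y p kd dn ha hX hp hload hscheme) as hrate.
  assert (hL : b < ln (INR p)).
  { rewrite <- (ln_exp b). apply ln_increasing; [apply exp_pos|].
    apply Rlt_trans with (INR m); [lra | apply lt_INR; lia]. }
  set (L := ln (INR p)) in *.
  replace (INR Z * alpha * L / (INR X * L + alpha * ln 2))
    with (v - v * c / (INR X * L + c)) in hrate by (unfold v, c; field; nra).
  assert (hvc : v * c <= eps * (INR X * L + c)).
  { assert (v * c = b * (eps * INR X)) by (unfold b; field; split; lra).
    assert (0 < eps * INR X) by nra. nra. }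
  assert (v * c / (INR X * L + c) <= eps).
  { apply Rmult_le_reg_r with (INR X * L + c); [nra|].
    unfold Rdiv. rewrite Rmult_assoc, Rinv_l by nra. lra. }
  lra.
Qed.

Lemma C_exact_alpha n k d alpha : (0 < d)%nat -> (k <= d)%nat -> (d < n)%nat -> 0 < alpha ->
  C_exact n k d alpha alpha = C_func k d alpha alpha.
Proof.
  intros d0 kd dn ha. apply Rle_antisym; [apply C_exact_le_C_func; auto; lra|].
  assert (hd : 0 < INR d) by (apply lt_0_INR; lia).
  rewrite C_func_alpha by (auto; lia).
  apply C_exact_ge_of_schemes with (Y := 1%nat); auto; [simpl; right; field; lra | intros m].
  destruct (ProductMatrix.mbr_schemes_large_prime n k d kd m) as (p & hp & hp2 & hs).
  exists p. rewrite Nat.pow_1_r. auto.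
Qed.

Lemma C_exact_ge_colouring n k d alpha gamma (q : nat) :
  (k <= d)%nat -> (d < n)%nat -> 0 < alpha -> (0 < q)%nat ->
  alpha <= INR q * (gamma / INR d) ->
  (INR k - (INR q - 1) * INR (n - k)) * alpha <= C_exact n k d alpha gamma.
Proof.
  intros kd dn ha hq hload. destruct n as [|n']; [lia|].
  destruct (Colouring.colouring_schemes_large_prime n' k d q kd hq) as (Z & hZ & hschemes).
  assert (hX : (0 < Nat.pow q (S n'))%nat) by (apply Nat.neq_0_lt_0, Nat.pow_nonzero; lia).
  assert (hXR : 0 < INR (Nat.pow q (S n'))) by (apply lt_0_INR; lia).
  apply Rle_trans with (INR Z * alpha / INR (Nat.pow q (S n'))).
  - assert (hZR : INR (S n') * INR (Nat.pow q (S n'))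
                  <= INR Z + INR (Nat.pow q (S n')) * (INR q * INR (S n' - k))).
    { rewrite <- !mult_INR, <- plus_INR. apply le_INR. exact hZ. }
    assert (eN : INR (S n') = INR k + INR (S n' - k)) by (rewrite <- plus_INR; f_equal; lia).
    apply Rmult_le_reg_r with (INR (Nat.pow q (S n'))); [exact hXR|].
    replace (INR Z * alpha / INR (Nat.pow q (S n')) * INR (Nat.pow q (S n')))
      with (INR Z * alpha) by (field; lra).
    nra.
  - apply C_exact_ge_of_schemes with (Y := Nat.pow q n'); auto.
    rewrite Nat.pow_succ_r', mult_INR.
    pose proof (pos_INR (Nat.pow q n')). nra.
Qed.

Lemma exists_nat_mul_ge (c s : R) : 0 < s -> exists q : nat, (0 < q)%nat /\ c <= INR q * s.
Proof.
  intros hs. destruct (INR_unbounded (Rmax 0 (c / s))) as [q hq].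
  pose proof (Rmax_l 0 (c / s)). pose proof (Rmax_r 0 (c / s)).
  exists q. split; [apply INR_lt; simpl; lra|].
  apply Rmult_le_reg_r with (/ s); [apply Rinv_0_lt_compat; lra|].
  rewrite Rmult_assoc, Rinv_r, Rmult_1_r by lra. left; unfold Rdiv in *; lra.
Qed.

Lemma interpolated_load (alpha s c D q : R) :
  0 < alpha -> 0 <= s <= 1 -> 0 < c -> 0 < D -> c <= q * s ->
  alpha <= q * ((s * (D * alpha / c) + (1 - s) * alpha) / D).
Proof.
  intros ha hs hc hD hqs.
  assert (hq : 0 < q) by nra.
  replace (q * ((s * (D * alpha / c) + (1 - s) * alpha) / D))
    with (q * s * alpha / c + q * (1 - s) * alpha / D) by (field; lra).
  assert (alpha <= q * s * alpha / c).
  { apply Rmult_le_reg_r with c; [exact hc|]. unfold Rdiv.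
    rewrite Rmult_assoc, Rinv_l, Rmult_1_r by lra. nra. }
  assert (0 <= q * (1 - s) * alpha / D)
    by (apply Rdiv_le_0_compat; [repeat apply Rmult_le_pos |]; lra).
  lra.
Qed.

Lemma ratio_bounds (u v K c alpha : R) :
  0 < alpha -> 0 <= c < K -> (K - c) * alpha <= u -> u <= v -> v <= K * alpha ->
  1 - c / K <= u / v <= 1.
Proof.
  intros ha hc hu huv hv.
  assert (hu0 : 0 < u) by nra.
  split.
  - apply Rle_trans with (u / (K * alpha)).
    + apply Rmult_le_reg_r with (K * alpha); [nra|].
      replace ((1 - c / K) * (K * alpha)) with ((K - c) * alpha) by (field; lra).
      replace (u / (K * alpha) * (K * alpha)) with u by (field; lra). exact hu.
    + unfold Rdiv. apply Rmult_le_compat_l; [lra|]. apply Rinv_le_contravar; lra.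
  - apply Rmult_le_reg_r with v; [lra|].
    unfold Rdiv. rewrite Rmult_assoc, Rinv_l by lra. lra.
Qed.

Lemma is_lim_seq_one_minus_div (c : R) (k : nat) :
  is_lim_seq (fun M => 1 - c / INR (k + M)) 1.
Proof.
  assert (hK : is_lim_seq (fun M => INR (k + M)) p_infty).
  { apply is_lim_seq_ext with (fun M => INR (M + k)); [intros M; f_equal; lia|].
    apply (is_lim_seq_incr_n INR k p_infty), is_lim_seq_INR. }
  assert (h0 : is_lim_seq (fun M => c / INR (k + M)) 0).
  { replace (Finite 0) with (Rbar_mult c (Rbar_inv p_infty)) by (simpl; f_equal; ring).
    apply is_lim_seq_scal_l, is_lim_seq_inv; [exact hK | discriminate]. }
  replace (Finite 1) with (Finite (1 - 0)) by (f_equal; ring).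
  apply is_lim_seq_minus'; [apply is_lim_seq_const | exact h0].
Qed.

Lemma is_lim_seq_ratio_one (u v : nat -> R) (k : nat) (alpha c : R) :
  0 < alpha -> 0 <= c ->
  (forall M, (INR (k + M) - c) * alpha <= u M) -> (forall M, u M <= v M) ->
  (forall M, v M <= INR (k + M) * alpha) ->
  is_lim_seq (fun M => u M / v M) 1.
Proof.
  intros ha hc hu huv hv.
  apply is_lim_seq_le_le_loc with (fun M => 1 - c / INR (k + M)) (fun _ => 1);
    [| apply is_lim_seq_one_minus_div | apply is_lim_seq_const].
  destruct (INR_unbounded c) as [N hN]. exists N. intros M hM.
  apply ratio_bounds with alpha; auto. split; [exact hc|].
  apply Rlt_le_trans with (INR N); [lra | apply le_INR; lia].
Qed.

Theorem theorem5p2 (n k d : nat) (alpha s : R) :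
  (1 <= k)%nat -> (k <= d)%nat -> (d < n)%nat -> 0 < alpha ->
  0 <= s <= 1 ->
  is_lim_seq
    (fun M : nat =>
       let gamma_MSR := INR (d + M) * alpha / (INR (d + M) - INR (k + M) + 1) in
       let gamma_MBR := alpha in
       let g := s * gamma_MSR + (1 - s) * gamma_MBR in
       C_exact (n + M) (k + M) (d + M) alpha g / C_func (k + M) (d + M) alpha g)
    1.
Proof.
  intros hk kd dn ha hs. cbv zeta.
  destruct (Req_dec s 0) as [-> | hs0].
  - apply is_lim_seq_ext with (fun _ => 1); [intros M | apply is_lim_seq_const].
    replace (0 * _ + (1 - 0) * alpha) with alpha by ring.
    rewrite C_exact_alpha by (lia || lra).
    symmetry. apply Rdiv_diag, Rgt_not_eq, C_func_pos; auto; lia.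
  - set (c := INR d - INR k + 1).
    assert (hc : forall M, INR (d + M) - INR (k + M) + 1 = c)
      by (intros M; unfold c; rewrite !plus_INR; ring).
    assert (hc0 : 0 < c) by (unfold c; assert (INR k <= INR d) by (apply le_INR; lia); lra).
    destruct (exists_nat_mul_ge c s ltac:(lra)) as (q & hq & hqs).
    assert (hq1 : 1 <= INR q) by (apply (le_INR 1); lia).
    apply is_lim_seq_ratio_one with k alpha ((INR q - 1) * INR (n - k)); [exact ha | | intros M..].
    + pose proof (pos_INR (n - k)). nra.
    + replace (n - k)%nat with (n + M - (k + M))%nat by lia.
      apply C_exact_ge_colouring; [lia | lia | exact ha | exact hq |].
      rewrite hc. apply interpolated_load; auto. apply lt_0_INR. lia.
    + apply C_exact_le_C_func; [lia | lia | lra |]. rewrite hc.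
      assert (0 < INR (d + M)) by (apply lt_0_INR; lia).
      assert (0 <= INR (d + M) * alpha / c) by (apply Rdiv_le_0_compat; nra). nra.
    + apply C_func_le.
Qed.
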